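(* Work in $\mathsf{ZF}$. For every (definable) proper class $\mathcal{C}$ and every non-zero ordinal $\alpha$, there is a surjection from $\mathcal{C}$ onto $\alpha$. *)

(* A deep embedding of first-order set theory (language {∈, =})
   with Tarskian semantics in arbitrary (normal) models of ZF.
   "ZF proves the schema" is rendered semantically (via completeness): for every
   formula phi defining C, there is a formula psi (uniform in phi, independent of
   the model) that defines, in every model of ZF, a surjection from C onto alpha. *)

Inductive form : Type :=
| FMem : nat -> nat -> form
| FEq  : nat -> nat -> form
| FFal : form
| FImp : form -> form -> form
| FAnd : form -> form -> form
| FOr  : form -> form -> form
| FAll : form -> form              (* binds de Bruijn index 0 *)
| FEx  : form -> form.

Definition scons {M : Type} (x : M) (rho : nat -> M) : nat -> M :=
  fun n => match n with 0 => x | S k => rho k end.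

Fixpoint sat {M : Type} (E : M -> M -> Prop) (rho : nat -> M) (p : form) : Prop :=
  match p with
  | FMem i j => E (rho i) (rho j)
  | FEq i j => rho i = rho j
  | FFal => False
  | FImp p q => sat E rho p -> sat E rho q
  | FAnd p q => sat E rho p /\ sat E rho q
  | FOr p q => sat E rho p \/ sat E rho q
  | FAll p => forall x : M, sat E (scons x rho) p
  | FEx p => exists x : M, sat E (scons x rho) p
  end.

(* (M, E) is a model of ZF (first-order: the schemas range over formulas with parameters). *)
Record ZF_model (M : Type) (E : M -> M -> Prop) : Prop := {
  zf_ext : forall a b, (forall z, E z a <-> E z b) -> a = b;
  zf_found : forall a, (exists z, E z a) -> exists y, E y a /\ ~ (exists z, E z y /\ E z a);
  zf_pair : forall a b, exists c, E a c /\ E b c;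
  zf_union : forall a, exists u, forall y z, E z y -> E y a -> E z u;
  zf_power : forall a, exists p, forall y, (forall z, E z y -> E z a) -> E y p;
  zf_inf : exists w, (exists e, E e w /\ forall z, ~ E z e) /\
             forall y, E y w -> exists s, E s w /\ forall z, E z s <-> (E z y \/ z = y);
  zf_sep : forall (phi : form) (rho : nat -> M) a,
             exists b, forall x, E x b <-> (E x a /\ sat E (scons x rho) phi);
  zf_repl : forall (phi : form) (rho : nat -> M) a,
             (forall x, E x a -> exists y, sat E (scons y (scons x rho)) phi /\
                 forall y', sat E (scons y' (scons x rho)) phi -> y' = y) ->
             exists b, forall x, E x a -> exists y, E y b /\ sat E (scons y (scons x rho)) phi
}.

Definition proper_class {M : Type} (E : M -> M -> Prop) (phi : form) (rho : nat -> M) : Prop :=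
  ~ (exists b, forall x, E x b <-> sat E (scons x rho) phi).

(* von Neumann ordinal: transitive set, linearly ordered by ∈ (well-foundedness from Foundation). *)
Definition is_ordinal {M : Type} (E : M -> M -> Prop) (a : M) : Prop :=
  (forall y z, E z y -> E y a -> E z a) /\
  (forall y z, E y a -> E z a -> E y z \/ y = z \/ E z y).

Definition class_surjection {M : Type} (E : M -> M -> Prop) (phi psi : form)
    (rho : nat -> M) (alpha : M) : Prop :=
  let C x := sat E (scons x rho) phi in
  let F x y := sat E (scons y (scons x (scons alpha rho))) psi in
  (forall x y, F x y -> C x /\ E y alpha) /\
  (forall x, C x -> exists y, F x y) /\
  (forall x y y', F x y -> F x y' -> y = y') /\
  (forall b, E b alpha -> exists x, C x /\ F x b).

From Stdlib Require Import Classical.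

(* Let R be the class of "levels" of elements of C, the level of x being
   the least ordinal g with x ∈ V_g.  Since C is proper, R is unbounded in the
   ordinals (otherwise C would be a subset of some V_g).  The transitive collapse
   h of R, defined by h(g) = sup {h(c) + 1 | c < g, c ∈ R}, is then strictly
   increasing on R and maps R onto all ordinals.  The surjection sends x ∈ C to
   h(level x) when this lies in alpha, and to 0 otherwise. *)

Definition lift (s : nat -> nat) : nat -> nat :=
  fun n => match n with 0 => 0 | S k => S (s k) end.

Fixpoint rename (s : nat -> nat) (p : form) : form :=
  match p with
  | FMem i j => FMem (s i) (s j)
  | FEq i j => FEq (s i) (s j)
  | FFal => FFal
  | FImp p q => FImp (rename s p) (rename s q)
  | FAnd p q => FAnd (rename s p) (rename s q)
  | FOr p q => FOr (rename s p) (rename s q)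
  | FAll p => FAll (rename (lift s) p)
  | FEx p => FEx (rename (lift s) p)
  end.

Lemma sat_ext {M} (E : M -> M -> Prop) p : forall r1 r2, (forall n, r1 n = r2 n) ->
  (sat E r1 p <-> sat E r2 p).
Proof.
  induction p; intros r1 r2 H; simpl; try (rewrite ?H, ?(IHp1 r1 r2 H), ?(IHp2 r1 r2 H); tauto).
  - split; intros A x; specialize (A x); revert A; apply IHp; intros [|n]; simpl; auto.
  - split; intros [x A]; exists x; revert A; apply IHp; intros [|n]; simpl; auto.
Qed.

Lemma sat_rename {M} (E : M -> M -> Prop) p : forall s r,
  sat E r (rename s p) <-> sat E (fun n => r (s n)) p.
Proof.
  induction p; intros s r; simpl; try (rewrite ?IHp1, ?IHp2; tauto).
  all: assert (Hx : forall x, sat E (scons x r) (rename (lift s) p)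
                            <-> sat E (scons x (fun n => r (s n))) p)
         by (intros x; rewrite IHp; apply sat_ext; intros [|n]; reflexivity).
  - split; intros A x; apply Hx, A.
  - split; intros [x A]; exists x; apply Hx, A.
Qed.

Definition env_pred : Type := forall M : Type, (M -> M -> Prop) -> (nat -> M) -> Prop.
Definition prop1 : Type := forall M : Type, (M -> M -> Prop) -> M -> (nat -> M) -> Prop.
Definition prop2 : Type := forall M : Type, (M -> M -> Prop) -> M -> M -> (nat -> M) -> Prop.

(* [P] is defined by a single formula in every structure: this is how a
   statement "ZF proves ..." about a defined class is rendered semantically. *)
Definition Definable (P : env_pred) : Prop :=
  exists p, forall M E r, sat E r p <-> P M E r.

Lemma def_mem i j : Definable (fun M E r => E (r i) (r j)).
Proof. exists (FMem i j); intros; simpl; tauto. Qed.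
Lemma def_eq i j : Definable (fun M E r => r i = r j).
Proof. exists (FEq i j); intros; simpl; tauto. Qed.
Lemma def_imp P Q : Definable P -> Definable Q -> Definable (fun M E r => P M E r -> Q M E r).
Proof. intros [p Hp] [q Hq]; exists (FImp p q); intros; simpl; rewrite Hp, Hq; tauto. Qed.
Lemma def_not P : Definable P -> Definable (fun M E r => ~ P M E r).
Proof. intros [p Hp]; exists (FImp p FFal); intros; simpl; rewrite Hp; tauto. Qed.
Lemma def_and P Q : Definable P -> Definable Q -> Definable (fun M E r => P M E r /\ Q M E r).
Proof. intros [p Hp] [q Hq]; exists (FAnd p q); intros; simpl; rewrite Hp, Hq; tauto. Qed.
Lemma def_or P Q : Definable P -> Definable Q -> Definable (fun M E r => P M E r \/ Q M E r).
Proof. intros [p Hp] [q Hq]; exists (FOr p q); intros; simpl; rewrite Hp, Hq; tauto. Qed.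

Lemma def_all (P : prop1) :
  Definable (fun M E r => P M E (r 0) (fun n => r (S n))) ->
  Definable (fun M E r => forall x : M, P M E x r).
Proof.
  intros [p Hp]; exists (FAll p); intros; simpl.
  split; intros A x; specialize (A x); apply Hp in A || apply Hp; exact A.
Qed.
Lemma def_ex (P : prop1) :
  Definable (fun M E r => P M E (r 0) (fun n => r (S n))) ->
  Definable (fun M E r => exists x : M, P M E x r).
Proof.
  intros [p Hp]; exists (FEx p); intros; simpl.
  split; intros [x A]; exists x; apply Hp in A || apply Hp; exact A.
Qed.

Lemma def_rename P : Definable P -> forall s, Definable (fun M E r => P M E (fun n => r (s n))).
Proof. intros [p Hp] s; exists (rename s p); intros; rewrite sat_rename; apply Hp. Qed.

Create HintDb definable discriminated.
Ltac definable_step := first [ apply def_not | apply def_and | apply def_or | apply def_imp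
  | apply def_all | apply def_ex | apply def_mem | apply def_eq ].
Ltac definable := repeat (cbv beta; first [ solve [eauto with definable] | definable_step ]).

Lemma separation (P : prop1) :
  Definable (fun M E r => P M E (r 0) (fun n => r (S n))) ->
  forall M E, ZF_model M E -> forall rho a, exists b, forall x, E x b <-> E x a /\ P M E x rho.
Proof.
  intros [p Hp] M E HZ rho a. destruct (zf_sep M E HZ p rho a) as [b Hb].
  exists b; intros x. rewrite Hb, Hp. tauto.
Qed.

Lemma replacement (P : prop2) :
  Definable (fun M E r => P M E (r 1) (r 0) (fun n => r (S (S n)))) ->
  forall M E, ZF_model M E -> forall rho a,
  (forall x, E x a -> exists y, P M E x y rho /\ forall y', P M E x y' rho -> y' = y) ->
  exists b, forall x, E x a -> exists y, E y b /\ P M E x y rho.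
Proof.
  intros [p Hp] M E HZ rho a Hf. destruct (zf_repl M E HZ p rho a) as [b Hb].
  - intros x Hx. destruct (Hf x Hx) as [y [Hy1 Hy2]]. exists y; split.
    + apply Hp; exact Hy1.
    + intros y' Hy'. apply Hy2. apply Hp in Hy'. exact Hy'.
  - exists b; intros x Hx. destruct (Hb x Hx) as [y [Hy1 Hy2]]. exists y; split; auto.
    apply Hp in Hy2; exact Hy2.
Qed.

Definition Subset {M} (E : M -> M -> Prop) a b := forall z, E z a -> E z b.
Definition Empty {M} (E : M -> M -> Prop) a := forall z, ~ E z a.
Definition IsSingleton {M} (E : M -> M -> Prop) s a := forall z, E z s <-> z = a.
Definition IsPair {M} (E : M -> M -> Prop) c a b := forall z, E z c <-> z = a \/ z = b.
Definition IsOPair {M} (E : M -> M -> Prop) p a b :=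
  forall z, E z p <-> (IsSingleton E z a \/ IsPair E z a b).
Definition Relates {M} (E : M -> M -> Prop) f a v := exists p, E p f /\ IsOPair E p a v.
Definition IsSucc {M} (E : M -> M -> Prop) s a := forall z, E z s <-> E z a \/ z = a.
Definition Transitive {M} (E : M -> M -> Prop) a := forall y z, E z y -> E y a -> E z a.
Definition IsUnion {M} (E : M -> M -> Prop) u a := forall z, E z u <-> exists y, E z y /\ E y a.

Lemma def_Subset i j : Definable (fun M E r => Subset E (r i) (r j)).
Proof. unfold Subset; definable. Qed.
Lemma def_Empty i : Definable (fun M E r => Empty E (r i)).
Proof. unfold Empty; definable. Qed.
Lemma def_IsSingleton i j : Definable (fun M E r => IsSingleton E (r i) (r j)).
Proof. unfold IsSingleton; definable. Qed.
Lemma def_IsPair i j k : Definable (fun M E r => IsPair E (r i) (r j) (r k)).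
Proof. unfold IsPair; definable. Qed.
#[export] Hint Resolve def_Subset def_Empty def_IsSingleton def_IsPair : definable.
Lemma def_IsOPair i j k : Definable (fun M E r => IsOPair E (r i) (r j) (r k)).
Proof. unfold IsOPair; definable. Qed.
#[export] Hint Resolve def_IsOPair : definable.
Lemma def_Relates i j k : Definable (fun M E r => Relates E (r i) (r j) (r k)).
Proof. unfold Relates; definable. Qed.
Lemma def_IsSucc i j : Definable (fun M E r => IsSucc E (r i) (r j)).
Proof. unfold IsSucc; definable. Qed.
Lemma def_ordinal i : Definable (fun M E r => is_ordinal E (r i)).
Proof. unfold is_ordinal; definable. Qed.
Lemma def_IsUnion i j : Definable (fun M E r => IsUnion E (r i) (r j)).
Proof. unfold IsUnion; definable. Qed.
#[export] Hint Resolve def_Relates def_IsSucc def_ordinal def_IsUnion : definable.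

Section Constructions.
Variable M : Type.
Variable E : M -> M -> Prop.
Hypothesis HZ : ZF_model M E.
Local Notation "x ∈ y" := (E x y) (at level 70).

Lemma ext a b : (forall z, z ∈ a <-> z ∈ b) -> a = b.
Proof. apply (zf_ext M E HZ). Qed.

Lemma empty_exists : exists e, Empty E e.
Proof. destruct (zf_inf M E HZ) as [w [[e [_ He]] _]]. exists e; exact He. Qed.

Lemma empty_unique a b : Empty E a -> Empty E b -> a = b.
Proof. intros A B; apply ext; intros z; split; intros C; [destruct (A z C)|destruct (B z C)]. Qed.

Lemma pair_exists a b : exists c, IsPair E c a b.
Proof.
  destruct (zf_pair M E HZ a b) as [c [Ha Hb]].
  destruct (separation (fun M E x r => x = r 0 \/ x = r 1) ltac:(definable)
              M E HZ (scons a (scons b (fun _ => a))) c) as [d Hd].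
  exists d; intros z; rewrite Hd; simpl. split; [tauto|]. intros [->| ->]; auto.
Qed.

Lemma singleton_exists a : exists s, IsSingleton E s a.
Proof. destruct (pair_exists a a) as [c Hc]; exists c; intros z; rewrite (Hc z); tauto. Qed.

Lemma union_exists a : exists u, IsUnion E u a.
Proof.
  destruct (zf_union M E HZ a) as [u Hu].
  destruct (separation (fun M E x r => exists y, E x y /\ E y (r 0)) ltac:(definable)
              M E HZ (fun _ => a) u) as [d Hd].
  exists d; intros z; rewrite Hd. split; [tauto|]. intros [y [A B]]; split; eauto.
Qed.

Lemma powerset_exists a : exists p, forall y, y ∈ p <-> Subset E y a.
Proof.
  destruct (zf_power M E HZ a) as [p Hp].
  destruct (separation (fun M E x r => Subset E x (r 0)) ltac:(definable)
              M E HZ (fun _ => a) p) as [d Hd].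
  exists d; intros z; rewrite Hd. split; [tauto|]. intros A; split; auto.
Qed.

Lemma binunion_exists a b : exists c, forall z, z ∈ c <-> z ∈ a \/ z ∈ b.
Proof.
  destruct (pair_exists a b) as [p Hp]. destruct (union_exists p) as [u Hu].
  exists u; intros z; rewrite (Hu z). split.
  - intros [y [A B]]; apply Hp in B as [->| ->]; auto.
  - intros [A|A]; [exists a|exists b]; rewrite (Hp _); auto.
Qed.

Lemma succ_exists a : exists s, IsSucc E s a.
Proof.
  destruct (singleton_exists a) as [s Hs]. destruct (binunion_exists a s) as [c Hc].
  exists c; intros z; rewrite (Hc z), (Hs z); tauto.
Qed.

Lemma opair_exists a b : exists p, IsOPair E p a b.
Proof.
  destruct (singleton_exists a) as [s Hs]. destruct (pair_exists a b) as [c Hc].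
  destruct (pair_exists s c) as [p Hp]. exists p. intros z; rewrite (Hp z). split.
  - intros [->| ->]; auto.
  - intros [A|A]; [left|right]; apply ext; intros w;
      [rewrite (A w), (Hs w)|rewrite (A w), (Hc w)]; tauto.
Qed.

Lemma opair_inj p a b c d : IsOPair E p a b -> IsOPair E p c d -> a = c /\ b = d.
Proof.
  intros P1 P2.
  destruct (singleton_exists a) as [sa Hsa]. destruct (pair_exists a b) as [pab Hpab].
  destruct (pair_exists c d) as [pcd Hpcd].
  assert (Ia : sa ∈ p) by (apply P1; auto).
  assert (Iab : pab ∈ p) by (apply P1; auto).
  assert (Icd : pcd ∈ p) by (apply P2; auto).
  assert (ac : a = c).
  { apply P2 in Ia as [A|A].
    - apply A, Hsa; reflexivity.
    - assert (c ∈ sa) as C by (apply A; auto). apply Hsa in C; auto. }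
  subst c. split; auto.
  apply P2 in Iab as [A|A].
  - assert (b = a) as -> by (apply A, Hpab; auto).
    apply P1 in Icd as [B|B].
    + symmetry; apply B, Hpcd; auto.
    + assert (d = a \/ d = a) as [? | ?] by (apply B, Hpcd; auto); auto.
  - assert (b = a \/ b = d) as [->| ->] by (apply A, Hpab; auto); auto.
    apply P1 in Icd as [B|B].
    + symmetry; apply B, Hpcd; auto.
    + assert (d = a \/ d = a) as [? | ?] by (apply B, Hpcd; auto); auto.
Qed.

End Constructions.

Section Ordinals.
Variable M : Type.
Variable E : M -> M -> Prop.
Hypothesis HZ : ZF_model M E.
Local Notation "x ∈ y" := (E x y) (at level 70).

Lemma minimal_element a : (exists z, z ∈ a) -> exists y, y ∈ a /\ forall z, z ∈ y -> ~ z ∈ a.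
Proof.
  intros A. destruct (zf_found M E HZ a A) as [y [B C]]. exists y; split; auto.
  intros z D F; apply C; eauto.
Qed.

Lemma no_self_member x : ~ x ∈ x.
Proof.
  intros A. destruct (singleton_exists M E HZ x) as [s Hs].
  destruct (minimal_element s) as [y [B C]]. { exists x; apply Hs; auto. }
  apply Hs in B; subst y. apply (C x A). apply Hs; auto.
Qed.

Lemma no_2cycle x y : x ∈ y -> y ∈ x -> False.
Proof.
  intros A B. destruct (pair_exists M E HZ x y) as [s Hs].
  destruct (minimal_element s) as [w [C D]]. { exists x; apply Hs; auto. }
  apply Hs in C as [->| ->].
  - apply (D y B). apply Hs; auto.
  - apply (D x A). apply Hs; auto.
Qed.

Lemma no_3cycle x y z : x ∈ y -> y ∈ z -> z ∈ x -> False.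
Proof.
  intros A B C. destruct (pair_exists M E HZ x y) as [s Hs].
  destruct (singleton_exists M E HZ z) as [t Ht]. destruct (binunion_exists M E HZ s t) as [u Hu].
  assert (Hu' : forall w, w ∈ u <-> w = x \/ w = y \/ w = z).
  { intros w; rewrite (Hu w), (Hs w), (Ht w); tauto. }
  destruct (minimal_element u) as [w [D F]]. { exists x; apply Hu'; auto. }
  apply Hu' in D as [->|[->| ->]].
  - apply (F z C). apply Hu'; auto.
  - apply (F x A). apply Hu'; auto.
  - apply (F y B). apply Hu'; auto.
Qed.

Lemma ord_trans a : is_ordinal E a -> forall y z, z ∈ y -> y ∈ a -> z ∈ a.
Proof. intros [A _]; exact A. Qed.

Lemma ord_linear a : is_ordinal E a -> forall y z, y ∈ a -> z ∈ a -> y ∈ z \/ y = z \/ z ∈ y.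
Proof. intros [_ A]; exact A. Qed.

(* Elements of ordinals are ordinals (transitivity uses the absence of short cycles). *)
Lemma ord_elem a y : is_ordinal E a -> y ∈ a -> is_ordinal E y.
Proof.
  intros Ha Hy. split.
  - intros w z A B. assert (Hw : w ∈ a) by (eapply ord_trans; eauto).
    assert (Hz : z ∈ a) by (eapply ord_trans; eauto).
    destruct (ord_linear a Ha z y Hz Hy) as [C|[C|C]]; auto.
    + subst z. exfalso; exact (no_2cycle y w A B).
    + exfalso; exact (no_3cycle y z w C A B).
  - intros w z A B. apply (ord_linear a Ha); eapply ord_trans; eauto.
Qed.

Lemma ord_empty e : Empty E e -> is_ordinal E e.
Proof. intros A; split; intros y z B C; destruct (A _ C). Qed.

Lemma ord_succ a s : is_ordinal E a -> IsSucc E s a -> is_ordinal E s.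
Proof.
  intros Ha Hs. split.
  - intros y z A B. apply Hs in B as [B| ->]; apply Hs; left; auto. eapply ord_trans; eauto.
  - intros y z A B. apply Hs in A as [A| ->]; apply Hs in B as [B| ->]; auto.
    apply (ord_linear a Ha); auto.
Qed.

(* An ordinal included in another one is equal to it or a member of it:
   it is the least element of the difference, if any. *)
Lemma ord_subset_cases c a :
  is_ordinal E c -> is_ordinal E a -> Subset E c a -> c = a \/ c ∈ a.
Proof.
  intros Hc Ha S.
  destruct (separation (fun M E x r => ~ E x (r 0)) ltac:(definable)
              M E HZ (fun _ => c) a) as [D HD]; simpl in HD.
  destruct (classic (exists z, z ∈ D)) as [ND|N].
  - right. destruct (minimal_element D ND) as [d [Hd1 Hd2]].
    apply HD in Hd1 as [Hd1 Hd3].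
    replace c with d; auto. apply (ext M E HZ); intros w; split; intros W.
    + apply NNPP; intros Nw. apply (Hd2 w W). apply HD; split; auto.
      eapply ord_trans; eauto.
    + destruct (ord_linear a Ha w d (S w W) Hd1) as [X|[X|X]]; auto.
      * subst; contradiction.
      * exfalso; apply Hd3. eapply ord_trans; eauto.
  - left. apply (ext M E HZ). intros w; split; auto. intros W.
    apply NNPP; intros Nw. apply N. exists w. apply HD; auto.
Qed.

(* Any two ordinals are comparable: compare both with their intersection. *)
Lemma ord_trichotomy a b : is_ordinal E a -> is_ordinal E b -> a ∈ b \/ a = b \/ b ∈ a.
Proof.
  intros Ha Hb.
  destruct (separation (fun M E x r => E x (r 0)) ltac:(definable)
              M E HZ (fun _ => b) a) as [c Hc]; simpl in Hc.
  assert (Oc : is_ordinal E c).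
  { split.
    - intros y z A B. apply Hc in B as [B1 B2]. apply Hc; split; eapply ord_trans; eauto.
    - intros y z A B. apply Hc in A; apply Hc in B. apply (ord_linear a Ha); tauto. }
  assert (Sa : Subset E c a) by (intros z Z; apply Hc in Z; tauto).
  assert (Sb : Subset E c b) by (intros z Z; apply Hc in Z; tauto).
  destruct (ord_subset_cases c a Oc Ha Sa) as [<-|Ca];
    destruct (ord_subset_cases c b Oc Hb Sb) as [Cb|Cb]; subst; auto.
  exfalso. apply (no_self_member c). apply Hc; auto.
Qed.

Lemma ord_subset_iff a b : is_ordinal E a -> is_ordinal E b -> (Subset E a b <-> a ∈ b \/ a = b).
Proof.
  intros Ha Hb; split.
  - intros S. destruct (ord_subset_cases a b Ha Hb S); auto.
  - intros [A| ->]; intros z Z; auto. eapply ord_trans; eauto.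
Qed.

Lemma ord_of_transitive a : Transitive E a -> (forall y, y ∈ a -> is_ordinal E y) -> is_ordinal E a.
Proof. intros T O. split; auto. intros y z A B. apply ord_trichotomy; auto. Qed.

Lemma ord_union a u : (forall y, y ∈ a -> is_ordinal E y) -> IsUnion E u a -> is_ordinal E u.
Proof.
  intros O U. apply ord_of_transitive.
  - intros y z A B. apply U in B as [w [B C]]. apply U. exists w; split; auto.
    eapply ord_trans; eauto.
  - intros y A. apply U in A as [w [A B]]. eapply ord_elem; eauto.
Qed.

Lemma ord_induction (P : prop1) :
  Definable (fun M E r => P M E (r 0) (fun n => r (S n))) -> forall rho,
  (forall g, is_ordinal E g -> (forall d, d ∈ g -> P M E d rho) -> P M E g rho) ->
  forall g, is_ordinal E g -> P M E g rho.
Proof.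
  intros HP rho IH g Hg. apply NNPP; intros N.
  destruct (succ_exists M E HZ g) as [s Hs].
  assert (Os : is_ordinal E s) by (eapply ord_succ; eauto).
  destruct (separation (fun M E x r => ~ P M E x r) ltac:(definable) M E HZ rho s) as [D HD].
  destruct (minimal_element D) as [d [Hd1 Hd2]].
  { exists g; apply HD; split; auto. apply Hs; auto. }
  apply HD in Hd1 as [Hd1 Hd3]. apply Hd3, IH; [eapply ord_elem; eauto|].
  intros z Z. apply NNPP; intros Nz. apply (Hd2 z Z). apply HD; split; auto.
  eapply ord_trans; eauto.
Qed.

Lemma ord_least (P : prop1) :
  Definable (fun M E r => P M E (r 0) (fun n => r (S n))) -> forall rho g,
  is_ordinal E g -> P M E g rho ->
  exists m, is_ordinal E m /\ P M E m rho /\ forall d, d ∈ m -> ~ P M E d rho.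
Proof.
  intros HP rho g Hg Pg. apply NNPP; intros N.
  assert (H : forall g, is_ordinal E g -> ~ P M E g rho).
  { apply (ord_induction (fun M E x r => ~ P M E x r) ltac:(definable)).
    intros h Hh IH Ph. apply N. exists h; auto. }
  eapply H; eauto.
Qed.

End Ordinals.

(* Given a definable relation G(c, u, w) (with
   parameters rho) that is functional in w, there is a definable class function
   on the ordinals with  value(g) = ⋃ {G(c, value(c)) | c ∈ g}. *)
Definition step_rel : Type :=
  forall M : Type, (M -> M -> Prop) -> M -> M -> M -> (nat -> M) -> Prop.

Section Recursion.
Variable G : step_rel.

Definition RecStep {M} (E : M -> M -> Prop) (rho : nat -> M) f d v :=
  forall z, E z v <-> exists c, E c d /\ exists u w, Relates E f c u /\ G M E c u w rho /\ E z w.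
Definition Attempt {M} (E : M -> M -> Prop) (rho : nat -> M) f g :=
  is_ordinal E g /\ (forall a, E a g -> exists v, Relates E f a v) /\
  (forall a v v', Relates E f a v -> Relates E f a v' -> v = v') /\
  (forall a v, Relates E f a v -> RecStep E rho f a v).
Definition RecVal {M} (E : M -> M -> Prop) (rho : nat -> M) g v :=
  exists f g', Attempt E rho f g' /\ Subset E g g' /\ RecStep E rho f g v.

Hypothesis G_definable :
  Definable (fun M E r => G M E (r 0) (r 1) (r 2) (fun n => r (S (S (S n))))).

Lemma def_G i j k s : Definable (fun M E r => G M E (r i) (r j) (r k) (fun n => r (s n))).
Proof. exact (def_rename _ G_definable (scons i (scons j (scons k s)))). Qed.
#[local] Hint Resolve def_G : definable.
Lemma def_RecStep s i j k : Definable (fun M E r => RecStep E (fun n => r (s n)) (r i) (r j) (r k)).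
Proof. unfold RecStep; definable. Qed.
#[local] Hint Resolve def_RecStep : definable.
Lemma def_Attempt s i j : Definable (fun M E r => Attempt E (fun n => r (s n)) (r i) (r j)).
Proof. unfold Attempt; definable. Qed.
#[local] Hint Resolve def_Attempt : definable.
Lemma def_RecVal s i j : Definable (fun M E r => RecVal E (fun n => r (s n)) (r i) (r j)).
Proof. unfold RecVal; definable. Qed.

Section InModel.
Variable M : Type.
Variable E : M -> M -> Prop.
Hypothesis HZ : ZF_model M E.
Variable rho : nat -> M.
Hypothesis G_total : forall d u, exists w, G M E d u w rho.
Hypothesis G_functional : forall d u w w', G M E d u w rho -> G M E d u w' rho -> w = w'.
Local Notation "x ∈ y" := (E x y) (at level 70).

Lemma RecStep_transfer f f' d v : (forall c u, c ∈ d -> (Relates E f c u <-> Relates E f' c u)) ->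
  RecStep E rho f d v -> RecStep E rho f' d v.
Proof.
  intros A S z. rewrite (S z). split; intros [c [C [u [w [D F]]]]]; exists c; split; auto;
  exists u, w; split; auto; apply A; auto.
Qed.

Lemma RecStep_unique f f' d v v' :
  (forall c u u', c ∈ d -> Relates E f c u -> Relates E f' c u' -> u = u') ->
  (forall c, c ∈ d -> exists u, Relates E f c u) -> (forall c, c ∈ d -> exists u, Relates E f' c u) ->
  RecStep E rho f d v -> RecStep E rho f' d v' -> v = v'.
Proof.
  intros A T1 T2 S1 S2. apply (ext M E HZ). intros z. rewrite (S1 z), (S2 z). split.
  - intros [c [C [u [w [D [F K]]]]]]. destruct (T2 c C) as [u' D'].
    exists c; split; auto. exists u', w. assert (u = u') by (apply (A c); auto). subst; auto.
  - intros [c [C [u [w [D [F K]]]]]]. destruct (T1 c C) as [u' D'].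
    exists c; split; auto. exists u', w. assert (u' = u) by (apply (A c); auto). subst; auto.
Qed.

Lemma RecStep_exists f d : (forall c, c ∈ d -> exists u, Relates E f c u) ->
  (forall c u u', Relates E f c u -> Relates E f c u' -> u = u') -> exists v, RecStep E rho f d v.
Proof.
  intros T U.
  destruct (replacement (fun M E x y r => exists u, Relates E (r 0) x u /\ G M E x u y (fun n => r (S n)))
    ltac:(definable) M E HZ (scons f rho) d) as [B HB].
  { intros x Hx. destruct (T x Hx) as [u Hu]. destruct (G_total x u) as [w Hw].
    exists w; split; [exists u; split; auto|]. simpl.
    intros y [u' [H1 H2]]. rewrite (U x u' u H1 Hu) in H2. eapply G_functional; eauto. }
  destruct (union_exists M E HZ B) as [V HV].
  destruct (separation (fun M E z r => exists c, E c (r 0) /\ exists u w, Relates E (r 1) c u /\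
       G M E c u w (fun n => r (S (S n))) /\ E z w) ltac:(definable)
       M E HZ (scons d (scons f rho)) V) as [v Hv].
  exists v. intros z. rewrite (Hv z). simpl. split; [tauto|]. intros A; split; auto.
  destruct A as [c [C [u [w [D [F K]]]]]]. apply HV.
  destruct (HB c C) as [w' [W1 [u' [W2 W3]]]]. exists w. split; auto.
  rewrite (U c u u' D W2) in F. rewrite (G_functional c u' w w' F W3); auto.
Qed.

(* Two attempts agree on their common domain (least disagreement is impossible). *)
Lemma attempts_agree f f' g g' : Attempt E rho f g -> Attempt E rho f' g' ->
  forall d v v', d ∈ g -> d ∈ g' -> Relates E f d v -> Relates E f' d v' -> v = v'.
Proof.
  intros [O1 [T1 [U1 S1]]] [O2 [T2 [U2 S2]]] d v v' D1 D2 A1 A2.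
  apply NNPP; intros N.
  destruct (separation (fun M E x r => E x (r 0) /\
             exists v v', Relates E (r 1) x v /\ Relates E (r 2) x v' /\ v <> v')
    ltac:(definable) M E HZ (scons g' (scons f (scons f' rho))) g) as [D HD]. simpl in HD.
  destruct (minimal_element M E HZ D) as [m [Hm1 Hm2]].
  { exists d. apply HD; split; auto. split; auto. exists v, v'; auto. }
  apply HD in Hm1 as [Hm1 [Hm3 [x [x' [X1 [X2 X3]]]]]]. apply X3.
  apply (RecStep_unique f f' m); auto.
  - intros c u u' C A B. apply NNPP; intros N'. apply (Hm2 c C). apply HD.
    split; [eapply ord_trans; eauto|]. split; [eapply ord_trans; eauto|]. exists u, u'; auto.
  - intros c C; apply T1; eapply ord_trans; eauto.
  - intros c C; apply T2; eapply ord_trans; eauto.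
Qed.

Lemma attempt_RecVal f g d u : Attempt E rho f g -> d ∈ g -> (Relates E f d u <-> RecVal E rho d u).
Proof.
  intros R D. pose proof R as [O [T [U S]]]. split.
  - intros A. exists f, g. split; auto. split; auto.
    intros z Z. eapply ord_trans; eauto.
  - intros [h [g2 [R2 [Sb St]]]].
    destruct (T d D) as [u' A]. replace u with u'; auto.
    apply (RecStep_unique f h d); auto.
    + intros c x x' C X X'. apply (attempts_agree f h g g2 R R2 c x x'); auto.
      eapply ord_trans; eauto.
    + intros c C. apply T. eapply ord_trans; eauto.
    + intros c C. destruct R2 as [_ [T2 _]]. apply T2; auto.
Qed.

Lemma RecVal_unique d v v' : RecVal E rho d v -> RecVal E rho d v' -> v = v'.
Proof.
  intros [f [g [R [Sb St]]]] [f' [g' [R' [Sb' St']]]].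
  apply (RecStep_unique f f' d); auto.
  - intros c x x' C X X'. eapply (attempts_agree f f' g g'); eauto.
  - intros c C. destruct R as [_ [T _]]. auto.
  - intros c C. destruct R' as [_ [T _]]. auto.
Qed.

Lemma RecVal_graph g : (forall d, d ∈ g -> exists v, RecVal E rho d v) ->
  exists f, forall a v, Relates E f a v <-> a ∈ g /\ RecVal E rho a v.
Proof.
  intros Hv.
  destruct (replacement (fun M E x p r => exists v, RecVal E r x v /\ IsOPair E p x v)
              ltac:(definable) M E HZ rho g) as [B HB].
  { intros x Hx. destruct (Hv x Hx) as [v V]. destruct (opair_exists M E HZ x v) as [p P].
    exists p; split; [exists v; auto|]. intros p' [v' [V' P']].
    rewrite (RecVal_unique x v' v V' V) in P'.
    apply (ext M E HZ). intros z; rewrite (P z), (P' z); tauto. }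
  destruct (separation (fun M E p r => exists d, E d (r 0) /\
              exists v, RecVal E (fun n => r (S n)) d v /\ IsOPair E p d v)
    ltac:(definable) M E HZ (scons g rho) B) as [f Hf]. simpl in Hf.
  exists f. intros a v; split.
  - intros [p [P1 P2]]. apply Hf in P1 as [_ [d [D [v' [V' P']]]]].
    destruct (opair_inj M E HZ p a v d v' P2 P') as [-> ->]. auto.
  - intros [A V]. destruct (HB a A) as [p [P1 [v' [V' P']]]].
    rewrite (RecVal_unique a v' v V' V) in P'. exists p; split; auto.
    apply Hf; split; auto. exists a; split; auto. exists v; auto.
Qed.

Lemma attempt_exists g : is_ordinal E g -> exists f, Attempt E rho f g.
Proof.
  intros Og.
  apply (ord_induction M E HZ (fun M E x r => exists f, Attempt E r f x) ltac:(definable) rho); auto.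
  clear g Og. intros g Og IH.
  assert (Hv : forall d, d ∈ g -> exists v, RecVal E rho d v).
  { intros d D. destruct (IH d D) as [f R]. pose proof R as [O [T [U S]]].
    destruct (RecStep_exists f d T U) as [v Hv].
    exists v, f, d. split; auto. split; auto. intros z Z; auto. }
  destruct (RecVal_graph g Hv) as [f AF].
  exists f. split; auto. split; [|split].
  - intros a A. destruct (Hv a A) as [v V]. exists v; apply AF; auto.
  - intros a v v' A A'. apply AF in A, A'. eapply RecVal_unique; apply A || apply A'.
  - intros a v A. apply AF in A as [A [h [g2 [R2 [Sb St]]]]].
    apply (RecStep_transfer h); auto. intros c u C.
    rewrite (attempt_RecVal h g2 c u R2 (Sb c C)). rewrite AF. split; [|tauto].
    intros; split; auto. eapply ord_trans; eauto.
Qed.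

Lemma RecVal_exists g : is_ordinal E g -> exists v, RecVal E rho g v.
Proof.
  intros Og. destruct (attempt_exists g Og) as [f R]. pose proof R as [O [T [U S]]].
  destruct (RecStep_exists f g T U) as [v Hv].
  exists v, f, g. split; auto. split; auto. intros z Z; auto.
Qed.

Lemma RecVal_equation g v : RecVal E rho g v ->
  forall z, z ∈ v <-> exists c, c ∈ g /\ exists u w, RecVal E rho c u /\ G M E c u w rho /\ z ∈ w.
Proof.
  intros [f [g' [R [Sb St]]]] z. rewrite (St z).
  split; intros [c [C [u [w [A [B K]]]]]]; exists c; split; auto; exists u, w; split; auto;
  eapply attempt_RecVal; eauto.
Qed.

End InModel.
End Recursion.

Definition IsNat {M} (E : M -> M -> Prop) n :=
  is_ordinal E n /\ forall m, (E m n \/ m = n) -> Empty E m \/ exists j, IsSucc E m j.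
Lemma def_IsNat i : Definable (fun M E r => IsNat E (r i)).
Proof. unfold IsNat; definable. Qed.
#[export] Hint Resolve def_IsNat : definable.

(* Step of the recursion for the transitive closure of x = rho 0:
   T(g) = ⋃ {x ∪ ⋃ T(c) | c ∈ g}. *)
Definition closure_step (M : Type) (E : M -> M -> Prop) (d u w : M) (rho : nat -> M) :=
  forall z, E z w <-> E z (rho 0) \/ exists y, E z y /\ E y u.
Lemma def_closure_step :
  Definable (fun M E r => closure_step M E (r 0) (r 1) (r 2) (fun n => r (S (S (S n))))).
Proof. unfold closure_step; definable. Qed.

Section Omega.
Variable M : Type.
Variable E : M -> M -> Prop.
Hypothesis HZ : ZF_model M E.
Local Notation "x ∈ y" := (E x y) (at level 70).

Lemma nat_elem n m : IsNat E n -> m ∈ n -> IsNat E m.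
Proof.
  intros [On Hn] A. split. { eapply ord_elem; eauto. }
  intros k [K| ->]; apply Hn; auto. left; eapply ord_trans; eauto.
Qed.

Lemma nat_in_inductive w e n : Empty E e -> e ∈ w -> (forall m s, m ∈ w -> IsSucc E s m -> s ∈ w) ->
  IsNat E n -> n ∈ w.
Proof.
  intros He ew Hs [On Hn]. apply NNPP; intros N.
  destruct (succ_exists M E HZ n) as [s Hsn]. assert (Os : is_ordinal E s) by (eapply ord_succ; eauto).
  destruct (separation (fun M E x r => ~ E x (r 0)) ltac:(definable) M E HZ (fun _ => w) s)
    as [D HD]. simpl in HD.
  destruct (minimal_element M E HZ D) as [m [Hm1 Hm2]].
  { exists n; apply HD; split; auto. apply Hsn; auto. }
  apply HD in Hm1 as [Hm1 Hm3]. apply Hm3.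
  destruct (Hn m) as [Em|[j Sj]]. { apply Hsn; auto. }
  - replace m with e; auto. eapply empty_unique; eauto.
  - apply (Hs j); auto. apply NNPP; intros Nj. apply (Hm2 j). { apply Sj; auto. }
    apply HD; split; auto. eapply ord_trans; eauto. apply Sj; auto.
Qed.

Lemma omega_exists : exists w, is_ordinal E w /\ (exists e, Empty E e /\ e ∈ w) /\
  forall n s, n ∈ w -> IsSucc E s n -> s ∈ w.
Proof.
  destruct (zf_inf M E HZ) as [w [[e [ew He]] Hw]].
  assert (Hs : forall n s, n ∈ w -> IsSucc E s n -> s ∈ w).
  { intros n s N S. destruct (Hw n N) as [s' [S1 S2]]. replace s with s'; auto.
    apply (ext M E HZ); intros z; rewrite (S z); apply S2. }
  destruct (separation (fun M E x r => IsNat E x) ltac:(definable) M E HZ (fun _ => w) w)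
    as [om Hom]. simpl in Hom.
  exists om. split; [|split].
  - apply ord_of_transitive; auto.
    + intros y z A B. apply Hom in B as [B1 B2]. assert (IsNat E z) by (eapply nat_elem; eauto).
      apply Hom; split; auto. apply (nat_in_inductive w e); auto.
    + intros y A. apply Hom in A. apply A.
  - exists e; split; auto. apply Hom; split; auto. split. { apply ord_empty; auto. }
    intros m [A| ->]; auto. destruct (He m A).
  - intros n s A S. apply Hom in A as [A1 [A2 A3]]. apply Hom; split; [eapply Hs; eauto|].
    split. { eapply ord_succ; eauto. }
    intros m [B| ->]. { apply S in B as [B| ->]; apply A3; auto. }
    right; exists n; auto.
Qed.

(* Every set is included in a transitive set: the value at omega of the
   closure recursion. *)
Lemma transitive_superset x : exists T, Transitive E T /\ Subset E x T.
Proof.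
  destruct omega_exists as [w [Ow [[e [He ew]] Hw]]].
  set (rho := fun _ : nat => x).
  assert (Gtot : forall d u, exists w, closure_step M E d u w rho).
  { intros d u. destruct (union_exists M E HZ u) as [v Hv].
    destruct (binunion_exists M E HZ x v) as [c Hc].
    exists c. intros z. rewrite (Hc z), (Hv z). unfold rho; tauto. }
  assert (Guniq : forall d u w w', closure_step M E d u w rho -> closure_step M E d u w' rho -> w = w').
  { intros d u a b A B. apply (ext M E HZ); intros z; rewrite (A z), (B z); tauto. }
  pose proof (RecVal_exists closure_step def_closure_step M E HZ rho Gtot Guniq) as Tex.
  pose proof (RecVal_equation closure_step M E HZ rho) as EQ.
  destruct (Tex w Ow) as [T HT].
  exists T. split.
  - intros y z A B. apply (EQ w T HT) in B as [n [N [u [v [U [G K]]]]]].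
    destruct (succ_exists M E HZ n) as [s Hs]. assert (sw : s ∈ w) by eauto.
    assert (Os : is_ordinal E s) by (apply (ord_elem M E HZ w); auto).
    destruct (Tex s Os) as [us Us]. destruct (Gtot s us) as [ws Ws].
    apply (EQ w T HT). exists s; split; auto. exists us, ws; split; auto; split; auto.
    apply Ws. right. exists y; split; auto.
    apply (EQ s us Us). exists n; split. { apply Hs; auto. }
    exists u, v; auto.
  - intros z Z. destruct (Tex e (ord_empty M E e He)) as [u U].
    destruct (Gtot e u) as [v V]. apply (EQ w T HT). exists e; split; auto.
    exists u, v; split; auto; split; auto. apply V; left; auto.
Qed.

(* ∈-induction for definable properties, via Foundation in a transitive superset. *)
Lemma epsilon_induction (P : prop1) :
  Definable (fun M E r => P M E (r 0) (fun n => r (S n))) -> forall rho,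
  (forall x, (forall y, y ∈ x -> P M E y rho) -> P M E x rho) -> forall x, P M E x rho.
Proof.
  intros HP rho IH x. apply NNPP; intros N.
  destruct (singleton_exists M E HZ x) as [s Hs]. destruct (transitive_superset s) as [T [TT ST]].
  destruct (separation (fun M E x r => ~ P M E x r) ltac:(definable) M E HZ rho T) as [D HD].
  destruct (minimal_element M E HZ D) as [m [Hm1 Hm2]].
  { exists x; apply HD; split; auto. apply ST, Hs; auto. }
  apply HD in Hm1 as [Hm1 Hm3]. apply Hm3, IH. intros y Y. apply NNPP; intros Ny.
  apply (Hm2 y Y). apply HD; split; auto. eapply TT; eauto.
Qed.

End Omega.

(* The cumulative hierarchy: V(g) = ⋃ {P(V(c)) | c ∈ g}. *)
Definition power_step (M : Type) (E : M -> M -> Prop) (d u w : M) (rho : nat -> M) :=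
  forall z, E z w <-> Subset E z u.
Lemma def_power_step :
  Definable (fun M E r => power_step M E (r 0) (r 1) (r 2) (fun n => r (S (S (S n))))).
Proof. unfold power_step; definable. Qed.

(* v = V(g); the recursion has no parameters, so the environment is a dummy. *)
Definition IsV {M} (E : M -> M -> Prop) g v := RecVal power_step E (fun _ => g) g v.
Lemma def_IsV i j : Definable (fun M E r => IsV E (r i) (r j)).
Proof. exact (def_RecVal power_step def_power_step (fun _ => i) i j). Qed.
#[export] Hint Resolve def_IsV : definable.

(* The level of x: the least ordinal g with x ∈ V(g) (that is, rank(x) + 1). *)
Definition Level {M} (E : M -> M -> Prop) x g :=
  is_ordinal E g /\ (exists v, IsV E g v /\ E x v) /\
  forall d, E d g -> forall v, IsV E d v -> ~ E x v.
Lemma def_Level i j : Definable (fun M E r => Level E (r i) (r j)).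
Proof. unfold Level; definable. Qed.
#[export] Hint Resolve def_Level : definable.

Section Hierarchy.
Variable M : Type.
Variable E : M -> M -> Prop.
Hypothesis HZ : ZF_model M E.
Local Notation "x ∈ y" := (E x y) (at level 70).

Lemma power_step_total rho : forall d u, exists w, power_step M E d u w rho.
Proof. intros d u. destruct (powerset_exists M E HZ u) as [p Hp]. exists p; exact Hp. Qed.
Lemma power_step_functional rho :
  forall d u w w', power_step M E d u w rho -> power_step M E d u w' rho -> w = w'.
Proof. intros d u a b A B. apply (ext M E HZ); intros z; rewrite (A z), (B z); tauto. Qed.

Lemma V_exists g : is_ordinal E g -> exists v, IsV E g v.
Proof.
  exact (RecVal_exists power_step def_power_step M E HZ (fun _ => g)
           (power_step_total _) (power_step_functional _) g).
Qed.

Lemma V_unique g v v' : IsV E g v -> IsV E g v' -> v = v'.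
Proof. exact (RecVal_unique power_step M E HZ (fun _ => g) g v v'). Qed.

Lemma IsV_env rho g v : RecVal power_step E rho g v <-> RecVal power_step E (fun _ => g) g v.
Proof.
  unfold RecVal, Attempt, RecStep, power_step; tauto.
Qed.

Lemma V_equation g v : IsV E g v ->
  forall z, z ∈ v <-> exists c, c ∈ g /\ exists u, IsV E c u /\ Subset E z u.
Proof.
  intros A z. rewrite (RecVal_equation power_step M E HZ _ g v A z). split.
  - intros [c [C [u [w [U [W K]]]]]]. exists c; split; auto. exists u; split; [|apply W; auto].
    apply IsV_env in U. exact U.
  - intros [c [C [u [U S]]]]. destruct (power_step_total (fun _ => g) c u) as [w W].
    exists c; split; auto. exists u, w. split; [apply IsV_env; exact U|]. split; auto. apply W; auto.
Qed.

Lemma V_monotone d g u v : is_ordinal E g -> d ∈ g -> IsV E d u -> IsV E g v -> Subset E u v.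
Proof.
  intros Og D U V z Z. apply (V_equation g v V).
  apply (V_equation d u U) in Z as [c [C [u' [U' S]]]].
  exists c; split; [eapply ord_trans; eauto|]. exists u'; auto.
Qed.

Lemma subset_in_next_V g s u y : is_ordinal E g -> IsSucc E s g -> IsV E g u -> Subset E y u ->
  exists v, IsV E s v /\ y ∈ v.
Proof.
  intros Og Hs U Y. destruct (V_exists s (ord_succ M E g s Og Hs)) as [v V].
  exists v; split; auto. apply (V_equation s v V). exists g; split; [apply Hs; auto|]. eauto.
Qed.

Lemma level_of_member x g v : is_ordinal E g -> IsV E g v -> x ∈ v -> exists k, Level E x k.
Proof.
  intros Og V X.
  destruct (ord_least M E HZ (fun M E g r => exists v, IsV E g v /\ E (r 0) v) ltac:(definable)
              (fun _ => x) g Og) as [m [Om [Pm Hm]]].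
  { exists v; split; auto. }
  exists m. split; auto. split; auto. intros d D w W Xw. apply (Hm d D). exists w; auto.
Qed.

Lemma level_unique z k k' : Level E z k -> Level E z k' -> k = k'.
Proof.
  intros [O1 [[v1 [V1 Z1]] M1]] [O2 [[v2 [V2 Z2]] M2]].
  destruct (ord_trichotomy M E HZ k k' O1 O2) as [A|[A|A]]; auto.
  - destruct (M2 k A v1 V1 Z1).
  - destruct (M1 k' A v2 V2 Z2).
Qed.

(* If every member of y has a level, the levels are bounded by an ordinal
   (the supremum of their successors, by Replacement). *)
Lemma levels_bounded y : (forall z, z ∈ y -> exists k, Level E z k) ->
  exists t, is_ordinal E t /\ forall z k, z ∈ y -> Level E z k -> k ∈ t.
Proof.
  intros L.
  destruct (replacement (fun M E z s r => exists k, Level E z k /\ IsSucc E s k) ltac:(definable)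
              M E HZ (fun _ => y) y) as [B HB].
  { intros z Z. destruct (L z Z) as [k K]. destruct (succ_exists M E HZ k) as [s S].
    exists s; split; [exists k; auto|]. intros s' [k' [K' S']].
    rewrite (level_unique z k' k K' K) in S'.
    apply (ext M E HZ); intros t; rewrite (S t), (S' t); tauto. }
  destruct (separation (fun M E s r => exists z, E z (r 0) /\ exists k, Level E z k /\ IsSucc E s k)
              ltac:(definable) M E HZ (fun _ => y) B) as [B' HB']. simpl in HB'.
  destruct (union_exists M E HZ B') as [t Ht].
  exists t; split.
  - apply (ord_union M E HZ B'); auto. intros s S.
    apply HB' in S as [_ [z [Z [k [[Ok _] Sk]]]]]. eapply ord_succ; eauto.
  - intros z k Z K. destruct (HB z Z) as [s [S [k' [K' Sk]]]].
    rewrite (level_unique z k' k K' K) in Sk.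
    apply Ht. exists s; split; [apply Sk; auto|]. apply HB'; split; auto. eauto.
Qed.

(* Every set has a level: by ∈-induction every set lies in some V(g). *)
Lemma level_exists x : exists k, Level E x k.
Proof.
  assert (Ranked : forall x, exists g v, is_ordinal E g /\ IsV E g v /\ x ∈ v).
  { apply (epsilon_induction M E HZ (fun M E x r => exists g v, is_ordinal E g /\ IsV E g v /\ E x v)
             ltac:(definable) (fun _ => x)).
    intros y IH.
    assert (L : forall z, z ∈ y -> exists k, Level E z k).
    { intros z Z. destruct (IH z Z) as [g [v [Og [V Zv]]]]. eapply level_of_member; eauto. }
    destruct (levels_bounded y L) as [t [Ot Bt]].
    destruct (succ_exists M E HZ t) as [s Hs]. destruct (V_exists t Ot) as [u U].
    destruct (subset_in_next_V t s u y Ot Hs U) as [v [V Yv]].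
    { intros z Z. destruct (L z Z) as [k K]. pose proof K as [Ok [[w [W Zw]] _]].
      apply (V_monotone k t w u Ot (Bt z k Z K) W U); auto. }
    exists s, v; split; [apply (ord_succ M E t s Ot Hs)|]; auto. }
  destruct (Ranked x) as [g [v [Og [V Xv]]]]. eapply level_of_member; eauto.
Qed.

End Hierarchy.

Section CollapseOfLevels.
Variable phi : form.

Lemma def_phi i s : Definable (fun M E r => sat E (scons (r i) (fun n => r (s n))) phi).
Proof.
  exists (rename (scons i s) phi); intros M E r. rewrite sat_rename.
  apply sat_ext. intros [|n]; reflexivity.
Qed.
#[local] Hint Resolve def_phi : definable.

Definition IsCLevel {M} (E : M -> M -> Prop) (rho : nat -> M) d :=
  exists x, sat E (scons x rho) phi /\ Level E x d.
Lemma def_IsCLevel s i : Definable (fun M E r => IsCLevel E (fun n => r (s n)) (r i)).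
Proof. unfold IsCLevel; definable. Qed.
#[local] Hint Resolve def_IsCLevel : definable.

(* h(g) = ⋃ {h(c) + 1 | c ∈ g, c a level of C}. *)
Definition collapse_step (M : Type) (E : M -> M -> Prop) (d u w : M) (rho : nat -> M) :=
  (IsCLevel E rho d /\ IsSucc E w u) \/ (~ IsCLevel E rho d /\ Empty E w).
Lemma def_collapse_step :
  Definable (fun M E r => collapse_step M E (r 0) (r 1) (r 2) (fun n => r (S (S (S n))))).
Proof. unfold collapse_step; definable. Qed.
Definition Collapse {M} (E : M -> M -> Prop) (rho : nat -> M) g v :=
  RecVal collapse_step E rho g v.
Lemma def_Collapse s i j : Definable (fun M E r => Collapse E (fun n => r (s n)) (r i) (r j)).
Proof. exact (def_RecVal collapse_step def_collapse_step s i j). Qed.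
#[local] Hint Resolve def_Collapse : definable.

(* The graph of the surjection, in the environment (y, x, alpha, rho):
   x ∈ C and y = h(level x) if that is in alpha, y = 0 otherwise. *)
Definition SurjGraph (M : Type) (E : M -> M -> Prop) (r : nat -> M) : Prop :=
  sat E (scons (r 1) (fun n => r (S (S (S n))))) phi /\
  exists k v, Level E (r 1) k /\ Collapse E (fun n => r (S (S (S n)))) k v /\
   ((E v (r 2) /\ r 0 = v) \/ (~ E v (r 2) /\ Empty E (r 0))).
Lemma def_SurjGraph : Definable SurjGraph.
Proof. unfold SurjGraph; definable. Qed.

Section InModel.
Variable M : Type.
Variable E : M -> M -> Prop.
Hypothesis HZ : ZF_model M E.
Variable rho : nat -> M.
Local Notation "x ∈ y" := (E x y) (at level 70).

Lemma collapse_step_total : forall d u, exists w, collapse_step M E d u w rho.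
Proof.
  intros d u. destruct (classic (IsCLevel E rho d)) as [I|I].
  - destruct (succ_exists M E HZ u) as [s S]. exists s; left; auto.
  - destruct (empty_exists M E HZ) as [e He]. exists e; right; auto.
Qed.
Lemma collapse_step_functional :
  forall d u w w', collapse_step M E d u w rho -> collapse_step M E d u w' rho -> w = w'.
Proof.
  intros d u w w' [[I S]|[I S]] [[I' S']|[I' S']]; try tauto.
  - apply (ext M E HZ); intros z; rewrite (S z), (S' z); tauto.
  - eapply empty_unique; eauto.
Qed.

Lemma collapse_exists g : is_ordinal E g -> exists v, Collapse E rho g v.
Proof.
  exact (RecVal_exists collapse_step def_collapse_step M E HZ rho
           collapse_step_total collapse_step_functional g).
Qed.
Lemma collapse_unique g v v' : Collapse E rho g v -> Collapse E rho g v' -> v = v'.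
Proof. apply RecVal_unique; auto. Qed.
Lemma collapse_equation g v : Collapse E rho g v -> forall z, z ∈ v <->
  exists c, c ∈ g /\ exists u w, Collapse E rho c u /\ collapse_step M E c u w rho /\ z ∈ w.
Proof. apply RecVal_equation; auto. Qed.

Lemma CLevel_ordinal d : IsCLevel E rho d -> is_ordinal E d.
Proof. intros [x [_ [O _]]]; auto. Qed.

(* The values of h are ordinals: unions of successors of ordinals. *)
Lemma collapse_ordinal g : is_ordinal E g -> forall v, Collapse E rho g v -> is_ordinal E v.
Proof.
  apply (ord_induction M E HZ (fun M E g r => forall v, Collapse E r g v -> is_ordinal E v)
           ltac:(definable) rho).
  clear g. intros g Og IH v Hv.
  assert (Mem : forall y, y ∈ v -> exists w, is_ordinal E w /\ y ∈ w /\ Subset E w v).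
  { intros y A. pose proof A as B.
    apply (collapse_equation g v Hv) in B as [c [C [u [w [U [W K]]]]]].
    destruct W as [[Ic S]|[_ S]]; [|destruct (S y K)].
    exists w; split; [apply (ord_succ M E u w); eauto|]. split; auto.
    intros t T. apply (collapse_equation g v Hv). exists c; split; auto.
    exists u, w. split; [exact U|]. split; [left; split; auto|exact T]. }
  apply (ord_of_transitive M E HZ).
  - intros y t A B. destruct (Mem y B) as [w [Ow [Yw Sw]]]. apply Sw. eapply ord_trans; eauto.
  - intros y A. destruct (Mem y A) as [w [Ow [Yw _]]]. eapply ord_elem; eauto.
Qed.

Lemma collapse_increasing c g u v :
  c ∈ g -> IsCLevel E rho c -> Collapse E rho c u -> Collapse E rho g v -> u ∈ v.
Proof.
  intros C I U V. apply (collapse_equation g v V). exists c; split; auto.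
  destruct (succ_exists M E HZ u) as [s S]. exists u, s; split; auto.
  split; [left; auto|]. apply S; auto.
Qed.

Lemma collapse_injective c c' u :
  IsCLevel E rho c -> IsCLevel E rho c' -> Collapse E rho c u -> Collapse E rho c' u -> c = c'.
Proof.
  intros I I' U U'.
  destruct (ord_trichotomy M E HZ c c' (CLevel_ordinal c I) (CLevel_ordinal c' I')) as [A|[A|A]]; auto.
  - destruct (no_self_member M E HZ u). eapply collapse_increasing; eauto.
  - destruct (no_self_member M E HZ u). eapply collapse_increasing; eauto.
Qed.

Hypothesis C_proper : proper_class E phi rho.

(* The levels of elements of C are not contained in any set: otherwise C would
   be a subset of the union of the corresponding V(k). *)
Lemma C_levels_unbounded :
  ~ exists B, forall x k, sat E (scons x rho) phi -> Level E x k -> k ∈ B.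
Proof.
  intros [B HB].
  destruct (replacement (fun M E x y r => (is_ordinal E x /\ IsV E x y) \/ (~ is_ordinal E x /\ Empty E y))
              ltac:(definable) M E HZ rho B) as [B2 HB2].
  { intros x X. destruct (classic (is_ordinal E x)) as [O|O].
    - destruct (V_exists M E HZ x O) as [v Vv]. exists v; split; [left; auto|].
      intros y [[_ Y]|[Y _]]; [eapply V_unique; eauto| tauto].
    - destruct (empty_exists M E HZ) as [e He]. exists e; split; [right; auto|].
      intros y [[Y _]|[_ Y]]; [tauto| eapply empty_unique; eauto]. }
  destruct (union_exists M E HZ B2) as [U HU].
  destruct (separation (fun M E x r => sat E (scons x r) phi) ltac:(definable) M E HZ rho U)
    as [Cs HC].
  apply C_proper. exists Cs. intros x. rewrite (HC x). split; [tauto|]. intros Cx; split; auto.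
  destruct (level_exists M E HZ x) as [k Kk]. pose proof Kk as [Ok [[w [Vw Xw]] _]].
  destruct (HB2 k (HB x k Cx Kk)) as [v [Vb [[_ Vk]|[NO _]]]]; [|contradiction].
  apply HU. exists v; split; auto. rewrite (V_unique M E HZ k v w Vk Vw). auto.
Qed.

(* The levels of C that h maps into a given set b form a set (h is injective). *)
Lemma collapse_preimage b : exists B, forall c u,
  IsCLevel E rho c -> Collapse E rho c u -> u ∈ b -> c ∈ B.
Proof.
  destruct (replacement (fun M E x y r => (exists c, IsCLevel E r c /\ Collapse E r c x /\ y = c) \/
      (~ (exists c, IsCLevel E r c /\ Collapse E r c x) /\ Empty E y))
      ltac:(definable) M E HZ rho b) as [B HB].
  { intros x X. destruct (classic (exists c, IsCLevel E rho c /\ Collapse E rho c x)) as [[c [I U]]|N].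
    - exists c; split; [left; eauto|]. intros y [[c' [I' [U' ->]]]|[N _]].
      + eapply collapse_injective; eauto.
      + destruct N; eauto.
    - destruct (empty_exists M E HZ) as [e He]. exists e; split; [right; auto|].
      intros y [[c' [I' [U' ->]]]|[_ Y]].
      + destruct N; eauto.
      + eapply empty_unique; eauto. }
  exists B. intros c u I U Ub.
  destruct (HB u Ub) as [y [Y [[c' [I' [U' ->]]]|[N _]]]]; [|destruct N; eauto].
  rewrite (collapse_injective c c' u I I' U U'); auto.
Qed.

Lemma collapse_unbounded b : exists c u, IsCLevel E rho c /\ Collapse E rho c u /\ ~ u ∈ b.
Proof.
  apply NNPP; intros N. destruct (collapse_preimage b) as [B HB].
  apply C_levels_unbounded. exists B. intros x k Cx K.
  assert (I : IsCLevel E rho k) by (exists x; auto).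
  destruct (collapse_exists k (CLevel_ordinal k I)) as [u U].
  apply (HB k u I U). apply NNPP; intros Nu. apply N. exists k, u; auto.
Qed.

(* h maps the levels of C onto the ordinals: given b, take the least level m of
   C with b ≤ h(m); then h(m) ≤ b, since every c < m in R has h(c) < b. *)
Lemma collapse_onto b : is_ordinal E b -> exists c, IsCLevel E rho c /\ Collapse E rho c b.
Proof.
  intros Ob. destruct (collapse_unbounded b) as [c0 [v0 [I0 [V0 N0]]]].
  assert (Ov0 : is_ordinal E v0) by exact (collapse_ordinal c0 (CLevel_ordinal c0 I0) v0 V0).
  destruct (ord_least M E HZ (fun M E g r => IsCLevel E (fun n => r (S n)) g /\
      exists v, Collapse E (fun n => r (S n)) g v /\ (E (r 0) v \/ r 0 = v)) ltac:(definable)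
      (scons b rho) c0 (CLevel_ordinal c0 I0)) as [m [Om [[Im [v [Vm Hv]]] Hmin]]].
  { split; auto. exists v0; split; auto. simpl.
    destruct (ord_trichotomy M E HZ b v0 Ob Ov0) as [A|[A|A]]; tauto. }
  simpl in Hv. exists m; split; auto.
  assert (Ov : is_ordinal E v) by (eapply collapse_ordinal; eauto).
  assert (Sb : Subset E v b).
  { intros z Z. apply (collapse_equation m v Vm) in Z as [c [C [u [w [U [W K]]]]]].
    destruct W as [[Ic S]|[_ S]]; [|destruct (S z K)].
    assert (Ou : is_ordinal E u) by exact (collapse_ordinal c (CLevel_ordinal c Ic) u U).
    assert (ub : u ∈ b).
    { destruct (ord_trichotomy M E HZ u b Ou Ob) as [A|[A|A]]; auto; exfalso;
        apply (Hmin c C); simpl; split; auto; exists u; split; auto;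
        first [left; assumption | right; congruence]. }
    apply S in K as [K| ->]; auto. eapply ord_trans; eauto. }
  apply (ord_subset_iff M E HZ v b Ov Ob) in Sb as [A| ->]; auto.
  destruct Hv as [B| ->].
  - destruct (no_2cycle M E HZ v b A B).
  - destruct (no_self_member M E HZ _ A).
Qed.

Lemma surjection_in_model alpha : is_ordinal E alpha -> (exists z, z ∈ alpha) ->
  let C x := sat E (scons x rho) phi in
  let F x y := SurjGraph M E (scons y (scons x (scons alpha rho))) in
  (forall x y, F x y -> C x /\ y ∈ alpha) /\
  (forall x, C x -> exists y, F x y) /\
  (forall x y y', F x y -> F x y' -> y = y') /\
  (forall b, b ∈ alpha -> exists x, C x /\ F x b).
Proof.
  intros Oa Ne C F.
  assert (E0 : exists e, Empty E e /\ e ∈ alpha).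
  { destruct (minimal_element M E HZ alpha Ne) as [m [Hm1 Hm2]]. exists m; split; auto.
    intros z Z. apply (Hm2 z Z). eapply ord_trans; eauto. }
  unfold C, F, SurjGraph; simpl. split; [|split; [|split]].
  - intros x y [Cx [k [v [K [H [[A ->]|[A B]]]]]]]; split; auto.
    destruct E0 as [e [Ee ea]]. rewrite (empty_unique M E HZ y e B Ee). auto.
  - intros x Cx. destruct (level_exists M E HZ x) as [k K].
    destruct (collapse_exists k (proj1 K)) as [v V].
    destruct (classic (v ∈ alpha)) as [A|A].
    + exists v. split; auto. exists k, v; auto.
    + destruct (empty_exists M E HZ) as [e Ee]. exists e; split; auto. exists k, v; auto.
  - intros x y y' [_ [k [v [K [H D]]]]] [_ [k' [v' [K' [H' D']]]]].
    rewrite <- (level_unique M E HZ x k k' K K') in H'.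
    rewrite <- (collapse_unique k v v' H H') in D'.
    destruct D as [[A ->]|[A B]]; destruct D' as [[A' ->]|[A' B']]; try tauto.
    eapply empty_unique; eauto.
  - intros b B. assert (Ob : is_ordinal E b) by (eapply ord_elem; eauto).
    destruct (collapse_onto b Ob) as [c [[x [Cx K]] H]].
    exists x; split; auto. split; auto. exists c, b. split; auto.
Qed.

End InModel.
End CollapseOfLevels.

Theorem proposition7p1 :
  forall phi : form, exists psi : form,
    forall (M : Type) (E : M -> M -> Prop), ZF_model M E ->
    forall (rho : nat -> M) (alpha : M),
      proper_class E phi rho ->
      is_ordinal E alpha ->
      (exists z, E z alpha) ->
      class_surjection E phi psi rho alpha.
Proof.
  intros phi. destruct (def_SurjGraph phi) as [psi Hpsi]. exists psi.
  intros M E HZ rho alpha Hp Ho Hne.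
  destruct (surjection_in_model phi M E HZ rho Hp alpha Ho Hne) as [Dom [Tot [Fun Onto]]].
  unfold class_surjection. split; [|split; [|split]].
  - intros x y F. apply Dom, Hpsi, F.
  - intros x Cx. destruct (Tot x Cx) as [y F]. exists y. apply Hpsi, F.
  - intros x y y' F F'. apply Hpsi in F, F'. exact (Fun x y y' F F').
  - intros b Bb. destruct (Onto b Bb) as [x [Cx F]]. exists x; split; auto. apply Hpsi, F.
Qed.
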